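(* Fix $1<p,q<\infty$ with $\frac1p+\frac1q=1$, an integer $r>1$, and put $t=r^{1/q}$, $s=r^{1/p}$. Then for every $x\in\mathcal N_s$ we have $|x|_{p,r}\le 1+\frac{\|x\|_p^p}{t}$.
   Context: For $\alpha>0$ let $C_\alpha=\{\pm\alpha^j: j\in\mathbb Z\}\cup\{0\}$ and $\mathcal N_\alpha=\{x\in c_{00}: x(i)\in C_\alpha \text{ for all } i\}$ ($c_{00}$ = finitely supported real sequences). Let $K^{\mathcal M}_{q,r}$ be the smallest subset of $c_{00}$ containing all $\pm e_n$ and such that whenever $y_1,\dots,y_l\in K^{\mathcal M}_{q,r}$, $l\le r$, have pairwise disjoint supports, then $r^{-1/q}(y_1+\dots+y_l)\in K^{\mathcal M}_{q,r}$. Define $|x|_{p,r}=\sup\{\sum_i x(i)y(i): y\in K^{\mathcal M}_{q,r}\}$. *)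

From HB Require Import structures.
From mathcomp Require Import all_boot all_order all_algebra.
From mathcomp Require Import all_classical all_reals all_analysis.
Set Implicit Arguments. Unset Strict Implicit. Unset Printing Implicit Defensive.
Import Order.TTheory GRing.Theory Num.Theory.
Local Open Scope classical_set_scope.
Local Open Scope ring_scope.

Definition c00 (R : realType) (x : nat -> R) : Prop :=
  exists n : nat, forall i : nat, (n <= i)%N -> x i = 0.

Definition C_alpha (R : realType) (alpha : R) : set R :=
  [set a | a = 0 \/ exists j : int, a = alpha ^ j \/ a = - alpha ^ j].

Definition N_alpha (R : realType) (alpha : R) : set (nat -> R) :=
  [set x | c00 x /\ forall i, C_alpha alpha (x i)].

Definition sgn_unit (R : realType) (b : bool) (n : nat) : nat -> R :=
  fun i => if i == n then (-1) ^+ b else 0.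

Inductive KM (R : realType) (q : R) (r : nat) : (nat -> R) -> Prop :=
| KM_unit (b : bool) (n : nat) : KM q r (sgn_unit R b n)
| KM_comb (l : nat) (ys : 'I_l -> nat -> R) :
    (0 < l <= r)%N ->
    (forall j, KM q r (ys j)) ->
    (forall j k, j != k -> forall i, ys j i = 0 \/ ys k i = 0) ->
    KM q r (fun i => (r%:R `^ (- q^-1)) * \sum_(j < l) ys j i).

Definition norm_pr (R : realType) (q : R) (r : nat) (x : nat -> R) : R :=
  sup [set (\sum_(i \in [set: nat]) x i * y i)%R | y in KM q r].

Definition lp_pow (R : realType) (p : R) (x : nat -> R) : R :=
  (\sum_(i \in [set: nat]) `|x i| `^ p)%R.

From HB Require Import structures.
From mathcomp Require Import all_boot all_order all_algebra.
From mathcomp Require Import all_classical all_reals all_analysis.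
Import Order.TTheory GRing.Theory Num.Theory.
Local Open Scope classical_set_scope.
Local Open Scope ring_scope.
Set Implicit Arguments. Unset Strict Implicit.

(* For y in K^M_{q,r} every nonzero |y(i)|^q is a power r^-k, and
   sum_i |y(i)|^q <= 1: each combination step multiplies q-th powers by 1/r
   and adds at most r disjointly supported pieces. For x in N_s every nonzero
   |x(i)|^p is an integer power r^j. So A = |x(i)|^p and B = |y(i)|^q differ
   by an integer power of r, hence either A <= B or r B <= A; in the first
   case A^(1/p) B^(1/q) <= B and in the second A^(1/p) B^(1/q) <= A / t.
   Summing over i gives sum_i x(i) y(i) <= ||x||_p^p / t + 1. *)

Definition at_most_one_nonzero (V : nmodType) (I : finType) (F : I -> V) :=
  forall j k, j != k -> F j = 0 \/ F k = 0.

Section AtMostOneNonzero.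
Variables (V : nmodType) (I : finType).

Lemma at_most_one_nonzeroP (F : I -> V) : at_most_one_nonzero F ->
  (forall j, F j = 0) \/ exists j0, forall j, j != j0 -> F j = 0.
Proof.
move=> F1; have [j0 Fj0|F0] := pickP (fun j => F j != 0).
  by right; exists j0 => j /F1 [//|Fj0_eq0]; rewrite Fj0_eq0 eqxx in Fj0.
by left => j; move/negbFE/eqP: (F0 j).
Qed.

Lemma sum_at_most_one_nonzero_in (P : V -> Prop) (F : I -> V) :
  at_most_one_nonzero F -> P 0 -> (forall j, P (F j)) -> P (\sum_j F j).
Proof.
move=> /at_most_one_nonzeroP [F0|[j0 F0]] P0 PF; first by rewrite big1.
by rewrite (bigD1 j0) //= big1 ?addr0 // => j /F0.
Qed.

Lemma at_most_one_nonzero_comp (W : nmodType) (G : V -> W) (F : I -> V) :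
  G 0 = 0 -> at_most_one_nonzero F -> at_most_one_nonzero (fun j => G (F j)).
Proof. by move=> G0 F1 j k /F1 [] /= ->; [left | right]. Qed.

Lemma sum_at_most_one_nonzero (W : nmodType) (G : V -> W) (F : I -> V) :
  G 0 = 0 -> at_most_one_nonzero F -> G (\sum_j F j) = \sum_j G (F j).
Proof.
move=> G0 /at_most_one_nonzeroP [F0|[j0 F0]].
  by rewrite !big1 // => j _; rewrite F0.
rewrite (bigD1 j0) //= big1 ?addr0 => [|j /F0 //].
by rewrite (bigD1 j0) //= big1 ?addr0 // => j /F0 ->.
Qed.

End AtMostOneNonzero.

Lemma fsbig_setT_ord (V : nmodType) (F : nat -> V) n :
  (forall i, (n <= i)%N -> F i = 0) ->
  \sum_(i \in [set: nat]) F i = \sum_(i < n) F i.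
Proof.
move=> Fn; rewrite fsbig_ord; apply: esym; apply: fsbig_widen => // i [_ /=].
by move/negP; rewrite -leqNgt => /Fn.
Qed.

Section KMStructure.
Variables (R : realType) (q : R) (r : nat).
Hypotheses (q_gt0 : 0 < q) (r_gt0 : (0 < r)%N).

Let rR_gt0 : 0 < r%:R :> R. Proof. by rewrite ltr0n. Qed.

Let norm_pow0 : `|0 : R| `^ q = 0.
Proof. by rewrite normr0 powR0 // gt_eqF. Qed.

Lemma norm_pow_sgn_unit (b : bool) n i :
  `|sgn_unit R b n i| `^ q = (i == n)%:R.
Proof. by rewrite /sgn_unit; case: (i == n); rewrite ?normr_sign ?powR1. Qed.

Lemma norm_pow_KM_comb l (ys : 'I_l -> nat -> R) i :
  at_most_one_nonzero (fun j => ys j i) ->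
  `|r%:R `^ (- q^-1) * \sum_(j < l) ys j i| `^ q =
    r%:R^-1 * \sum_(j < l) `|ys j i| `^ q.
Proof.
move=> disj; rewrite normrM powRM ?powR_ge0 // ger0_norm ?powR_ge0 //.
rewrite -powRrM mulNr mulVf ?gt_eqF // powR_inv1 ?ltW //.
by rewrite (@sum_at_most_one_nonzero _ _ _ (fun a => `|a| `^ q)).
Qed.

Lemma KM_norm_pow_geometric y : KM q r y -> forall i,
  `|y i| `^ q = 0 \/ exists k, `|y i| `^ q = r%:R^-1 ^+ k.
Proof.
elim=> [b n i|l ys _ _ IH disj i].
  by rewrite norm_pow_sgn_unit; case: (i == n); [right; exists 0%N | left].
have disj_i : at_most_one_nonzero (fun j => ys j i) by move=> j k /disj.
rewrite norm_pow_KM_comb //.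
have [->|[k ->]] := sum_at_most_one_nonzero_in
  (P := fun a => a = 0 \/ exists k, a = r%:R^-1 ^+ k)
  (at_most_one_nonzero_comp (G := fun a => `|a| `^ q) norm_pow0 disj_i)
  (or_introl erefl) (fun j => IH j i).
- by left; rewrite mulr0.
- by right; exists k.+1; rewrite exprS.
Qed.

Lemma KM_sum_norm_pow_le1 y : KM q r y -> forall n,
  \sum_(i < n) `|y i| `^ q <= 1.
Proof.
elim=> [b n m|l ys /andP[_ l_le_r] _ IH disj n].
  under eq_bigr do rewrite norm_pow_sgn_unit.
  apply: (sum_at_most_one_nonzero_in (P := fun a => a <= 1)
           (F := fun j : 'I_m => (j == n :> nat)%:R)) => [j k jk /=|//|j /=].
    case: eqP => [jn|_]; last by left.
    right; case: eqP => [kn|//].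
    by move: jk; rewrite -(inj_eq val_inj) /= jn kn eqxx.
  by rewrite lern1 leq_b1.
have comb i := norm_pow_KM_comb (fun j k jk => disj j k jk i).
under eq_bigr do rewrite comb.
rewrite -mulr_sumr exchange_big /=.
apply: (@le_trans _ _ (r%:R^-1 * \sum_(j < l) (1 : R))).
  by rewrite ler_wpM2l ?invr_ge0 ?(ltW rR_gt0) //; apply: ler_sum => j _; exact: IH.
by rewrite sumr_const card_ord ler_pdivrMl // mulr1 ler_nat.
Qed.

End KMStructure.

Lemma C_alpha_norm_powR (R : realType) (c p a : R) : 0 < c -> 0 < p ->
  C_alpha (c `^ p^-1) a -> a = 0 \/ exists j : int, `|a| `^ p = c ^ j.
Proof.
move=> c_gt0 p_gt0 [->|[j a_pm]]; [by left | right; exists j].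
have s_gt0 : 0 < c `^ p^-1 by rewrite powR_gt0.
have -> : `|a| = (c `^ p^-1) ^ j.
  by case: a_pm => ->; rewrite ?normrN ger0_norm // exprz_ge0 // ltW.
rewrite -powR_intmul ?(ltW s_gt0) // -!powRrM mulrC -mulrA mulfV ?gt_eqF //.
by rewrite mulr1 powR_intmul // ltW.
Qed.

Section ConjugateExponents.
Variables (R : realType) (p q : R).
Hypotheses (p_gt0 : 0 < p) (q_gt0 : 0 < q) (pq : p^-1 + q^-1 = 1).

Lemma powR_conj_mul_le (c A B : R) : 0 < c -> 0 < A -> 0 < B ->
  A <= B \/ c * B <= A -> A `^ p^-1 * B `^ q^-1 <= A / c `^ q^-1 + B.
Proof.
move=> c_gt0 A_gt0 B_gt0 [AB|cBA].
- apply: (@le_trans _ _ (B `^ p^-1 * B `^ q^-1)).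
    rewrite ler_wpM2r ?powR_ge0 //; apply: ge0_ler_powR;
      by rewrite ?nnegrE ?invr_ge0 ?(ltW p_gt0) ?(ltW A_gt0) ?(ltW B_gt0).
  rewrite -powRD; last by rewrite (gt_eqF B_gt0) implybT.
  rewrite pq powRr1 ?(ltW B_gt0) //.
  by rewrite lerDr divr_ge0 ?powR_ge0 ?(ltW A_gt0).
- have BA : B <= A / c by rewrite ler_pdivlMr // mulrC.
  apply: (@le_trans _ _ (A `^ p^-1 * (A / c) `^ q^-1)).
    rewrite ler_wpM2l ?powR_ge0 //; apply: ge0_ler_powR;
      by rewrite ?nnegrE ?invr_ge0 ?divr_ge0 ?(ltW q_gt0) ?(ltW A_gt0) ?(ltW B_gt0) ?(ltW c_gt0).
  rewrite powRM ?invr_ge0 ?(ltW A_gt0) ?(ltW c_gt0) // mulrA.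
  rewrite -powRD; last by rewrite (gt_eqF A_gt0) implybT.
  rewrite pq powRr1 ?(ltW A_gt0) //.
  rewrite -powR_inv1 ?(ltW c_gt0) // -powRrM mulN1r powRN.
  by rewrite lerDl ltW.
Qed.

Lemma powR_conj_mul_le_exprz (c : R) (j m : int) : 1 < c ->
  (c ^ j) `^ p^-1 * (c ^ m) `^ q^-1 <= c ^ j / c `^ q^-1 + c ^ m.
Proof.
move=> c_gt1; have c_gt0 : 0 < c by apply: lt_trans c_gt1.
apply: powR_conj_mul_le; rewrite ?exprz_gt0 //.
have [jm|mj] := lerP j m; [left | right]; first exact: ler_weXz2l (ltW c_gt1) _ _ jm.
rewrite -[c in c * _]expr1z -exprzDr ?unitfE ?gt_eqF //.
by apply: ler_weXz2l (ltW c_gt1) _ _ _; rewrite addrC lezD1.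
Qed.

Variable r : nat.
Hypothesis r_gt1 : (1 < r)%N.

Lemma norm_mul_le_split (a b : R) : C_alpha (r%:R `^ p^-1) a ->
  (`|b| `^ q = 0 \/ exists k, `|b| `^ q = r%:R^-1 ^+ k) ->
  `|a * b| <= `|a| `^ p / r%:R `^ q^-1 + `|b| `^ q.
Proof.
move=> a_C b_geom; have rR_gt1 : 1 < r%:R :> R by rewrite ltr1n.
have rR_gt0 : 0 < r%:R :> R by apply: lt_trans rR_gt1.
have [->|[j a_j]] := C_alpha_norm_powR rR_gt0 p_gt0 a_C.
  by rewrite mul0r normr0 addr_ge0 ?divr_ge0 ?powR_ge0.
case: b_geom => [/powR_eq0_eq0/normr0_eq0->|[k b_k]].
  by rewrite mulr0 normr0 addr_ge0 ?divr_ge0 ?powR_ge0.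
have root_powR (e x : R) : 0 < e -> 0 <= x -> x = (x `^ e) `^ e^-1.
  by move=> e_gt0 x_ge0; rewrite -powRrM mulfV ?gt_eqF // powRr1.
rewrite normrM {1}(root_powR p `|a|) // {1}(root_powR q `|b|) // a_j b_k.
rewrite (_ : r%:R^-1 ^+ k = r%:R ^ (- k%:Z)); last by rewrite -exprz_inv.
exact: powR_conj_mul_le_exprz.
Qed.

End ConjugateExponents.

Theorem mainTheorem4 (R : realType) (p q : R) (r : nat) :
  1 < p -> 1 < q -> p^-1 + q^-1 = 1 -> (1 < r)%N ->
  forall x : nat -> R, N_alpha (r%:R `^ p^-1) x ->
  norm_pr q r x <= 1 + lp_pow p x / (r%:R `^ q^-1).
Proof.
move=> p_gt1 q_gt1 pq r_gt1 x [[n x_n] x_C].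
have p_gt0 : 0 < p by apply: lt_trans p_gt1.
have q_gt0 : 0 < q by apply: lt_trans q_gt1.
have r_gt0 : (0 < r)%N by apply: ltn_trans r_gt1.
apply: ge_sup.
  exists (\sum_(i \in [set: nat]) x i * sgn_unit R false 0 i).
  by exists (sgn_unit R false 0) => //; exact: KM_unit.
move=> _ [y Ky <-].
rewrite (fsbig_setT_ord (n := n)); last by move=> i /x_n ->; rewrite mul0r.
rewrite /lp_pow (fsbig_setT_ord (n := n)); last first.
  by move=> i /x_n ->; rewrite normr0 powR0 ?gt_eqF.
rewrite mulr_suml addrC.
apply: le_trans (lerD (lexx _) (KM_sum_norm_pow_le1 q_gt0 r_gt0 Ky n)).
rewrite -big_split; apply: ler_sum => i _; apply: le_trans (ler_norm _) _.
exact: norm_mul_le_split (KM_norm_pow_geometric q_gt0 r_gt0 Ky i).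
Qed.
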